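(* Let $G$ be a spectrally threshold dominated graph on $n$ nodes with $m$ edges. Then there exists a threshold graph $T$ on $n$ nodes with $m$ edges such that $LE(T)\ge LE(G)$.
   Context: All graphs are finite and simple. For a graph $G$ on node set $\{1,\dots,n\}$ with edge set $E$, $m=|E|$, the Laplacian matrix is $L(G)=D(G)-A(G)$ (degree matrix minus adjacency matrix); its eigenvalues, the Laplacian eigenvalues of $G$, are denoted $\lambda_1(G)\ge\lambda_2(G)\ge\dots\ge\lambda_n(G)=0$. The Laplacian energy is $LE(G)=\sum_{i=1}^n\left|\lambda_i(G)-\frac{2m}{n}\right|$. A threshold graph is a graph obtainable from the empty graph by repeatedly adding a new node that is either isolated or adjacent to all previously added nodes. For a graph with degrees $d_1\ge\dots\ge d_n$, the conjugate degrees are $d_i^*=|\{j: d_j\ge i\}|$; for a threshold graph $T$ one has $\lambda_i(T)=d_i^*(T)$ for all $i$. A graph $G$ on $n$ nodes with $m$ edges is spectrally threshold dominated if for each $k\in\{1,\dots,n\}$ there is a threshold graph $T_k$ on $n$ nodes with $m$ edges satisfying $\sum_{i=1}^k\lambda_i(T_k)\ge\sum_{i=1}^k\lambda_i(G)$. *)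

From HB Require Import structures.
From mathcomp Require Import all_boot all_order all_algebra all_fingroup.
From Stdlib Require Import ClassicalEpsilon.
Set Implicit Arguments. Unset Strict Implicit. Unset Printing Implicit Defensive.
Import Order.TTheory GRing.Theory Num.Theory.
Local Open Scope ring_scope.

(* A (finite, simple) graph on node set 'I_n (= {1,...,n} shifted to 0-based)
   is an adjacency relation; it is simple when symmetric and irreflexive. *)
Definition simple_graph (n : nat) (G : rel 'I_n) : Prop :=
  symmetric G /\ irreflexive G.

Definition deg (n : nat) (G : rel 'I_n) (i : 'I_n) : nat := #|[set j | G i j]|.

Definition nedges (n : nat) (G : rel 'I_n) : nat :=
  #|[set p : 'I_n * 'I_n | (p.1 < p.2)%N && G p.1 p.2]|.

Definition laplacian (R : rcfType) (n : nat) (G : rel 'I_n) : 'M[R]_n :=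
  \matrix_(i, j) ((if i == j then (deg G i)%:R else 0) - (G i j)%:R).

Definition is_lap_spectrum (R : rcfType) (n : nat) (G : rel 'I_n) (s : seq R) : Prop :=
  [/\ size s = n, sorted (fun x y : R => y <= x) s &
      char_poly (laplacian R G) = \prod_(x <- s) ('X - x%:P)].

(* The Laplacian spectrum (exists and is unique for a real symmetric matrix). *)
Arguments laplacian R {n} G.
Arguments is_lap_spectrum R {n} G s.

Definition lap_spectrum (R : rcfType) (n : nat) (G : rel 'I_n) : seq R :=
  epsilon (inhabits [::]) (is_lap_spectrum R G).

(* lambda_{i+1}(G), 0-based index i *)
Definition lap_eig (R : rcfType) (n : nat) (G : rel 'I_n) (i : nat) : R :=
  nth 0 (lap_spectrum R G) i.

Arguments lap_spectrum R {n} G.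
Arguments lap_eig R {n} G i.

Definition lap_energy (R : rcfType) (n : nat) (G : rel 'I_n) : R :=
  \sum_(i < n) `|lap_eig R G i - (2 * nedges G)%:R / n%:R|.

Arguments lap_energy R {n} G.

(* Threshold graph: nodes can be ordered s(0), ..., s(n-1) (order of addition)
   with bits b such that the j-th added node is adjacent to all previously
   added nodes if b j, and to none of them otherwise. *)
Definition threshold_graph (n : nat) (G : rel 'I_n) : Prop :=
  simple_graph G /\
  exists (s : 'S_n) (b : 'I_n -> bool),
    forall i j : 'I_n, (i < j)%N -> G (s i) (s j) = b j.

Definition spec_threshold_dominated (R : rcfType) (n : nat) (G : rel 'I_n) : Prop :=
  forall k : nat, (1 <= k <= n)%N ->
    exists T : rel 'I_n,
      [/\ threshold_graph T, nedges T = nedges G &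
          \sum_(i < k) lap_eig R T i >= \sum_(i < k) lap_eig R G i].
Arguments spec_threshold_dominated R {n} G.

From mathcomp Require Import all_boot all_order all_algebra all_fingroup.
From mathcomp Require Import sesquilinear spectral complex.
From mathcomp Require Import lra.
From Stdlib Require Import ClassicalEpsilon.

Set Implicit Arguments.
Unset Strict Implicit.
Unset Printing Implicit Defensive.
Import Order.TTheory GRing.Theory Num.Theory.
Local Open Scope ring_scope.

(* Since tr L(G) = 2m, the shifted eigenvalues x_i = lambda_i - 2m/n sum to 0.
   For any such sequence, sum_i |x_i| >= 2 (x_1 + ... + x_k) for every k, with
   equality when the x_i are nonincreasing and k is where their sign changes.
   Taking that k for G, LE(G) = 2 sum_(i<=k) x_i(G) <= 2 sum_(i<=k) x_i(T_k)
   <= LE(T_k), the middle step being spectral threshold dominance. *)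

Lemma char_poly_similar (F : fieldType) n (P A : 'M[F]_n) : P \in unitmx ->
  char_poly (invmx P *m A *m P) = char_poly A.
Proof.
move=> Pu; rewrite /char_poly.
have XE : map_mx polyC (invmx P) *m 'X%:M *m map_mx polyC P = 'X%:M.
  by rewrite mul_mx_scalar -scalemxAl -map_mxM mulVmx // map_mx1 scalemx1.
have -> : char_poly_mx (invmx P *m A *m P) =
    map_mx polyC (invmx P) *m char_poly_mx A *m map_mx polyC P.
  by rewrite /char_poly_mx mulmxBr mulmxBl XE !map_mxM.
by rewrite !det_mulmx mulrAC -det_mulmx -map_mxM mulVmx // map_mx1 det1 mul1r.
Qed.

Lemma sum_roots_char_poly (F : fieldType) n (A : 'M[F]_n) (s : seq F) :
  char_poly A = \prod_(x <- s) ('X - x%:P) -> \sum_(x <- s) x = \tr A.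
Proof.
move=> cpA; have /eqP := size_char_poly A.
rewrite cpA size_prod_XsubC eqSS => /eqP sz.
case: n A cpA sz => [|n] A cpA sz.
  by move/size0nil: sz => ->; rewrite big_nil /mxtrace big_ord0.
apply: oppr_inj; rewrite -coefPn_prod_XsubC; last by rewrite sz.
by rewrite -cpA sz char_poly_trace.
Qed.

(* Diagonalize over R[i]: a real symmetric matrix is hermitian there, and the
   spectral theorem gives it real eigenvalues. *)
Lemma char_poly_sym_split (R : rcfType) n (A : 'M[R]_n) : A^T = A ->
  exists r : 'I_n -> R, char_poly A = \prod_(i < n) ('X - (r i)%:P).
Proof.
move=> Asym; set AC : 'M[complex R]_n := map_mx (real_complex R) A.
have AC_herm : AC \is hermsymmx.
  apply/is_hermitianmxP; rewrite expr0 scale1r; apply/matrixP => i j.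
  rewrite !mxE conj_Creal; last by apply/complex_realP; exists (A j i).
  by rewrite -[in RHS]Asym mxE.
have /orthomx_spectralP ACE := hermitian_normalmx AC_herm.
have /mxOverP Dreal := hermitian_spectral_diag_real AC_herm.
set D := spectral_diag AC in ACE Dreal.
exists (fun i => complex.Re (D 0 i)).
apply: (@map_poly_inj _ _ (real_complex R)).
rewrite map_char_poly -/AC ACE char_poly_similar ?spectral_unit //.
rewrite char_poly_trig ?diag_mx_is_trig // rmorph_prod.
apply: eq_bigr => i _; rewrite /= map_polyXsubC !mxE eqxx mulr1n.
by congr (_ - _%:P); apply/esym/RRe_real; exact: Dreal.
Qed.

Section Laplacian.
Variables (R : rcfType) (n : nat) (G : rel 'I_n).
Hypothesis simpleG : simple_graph G.

Lemma sum_deg : (\sum_(i < n) deg G i = 2 * nedges G)%N.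
Proof.
have [Gsym Girr] := simpleG.
have degE i : deg G i = (\sum_(j < n) G i j)%N.
  rewrite /deg -sum1_card big_mkcond /=; apply: eq_bigr => j _.
  by rewrite inE; case: (G i j).
have nedgesE : nedges G = (\sum_(i < n) \sum_(j < n) ((i < j)%N && G i j))%N.
  rewrite /nedges -sum1_card big_mkcond pair_bigA /=.
  by apply: eq_bigr => -[i j] _; rewrite inE /=; case: (_ && _).
have adjE i j : (G i j : nat) = ((i < j)%N && G i j + (j < i)%N && G i j)%N.
  by case: (ltngtP i j) => [_|_|/val_inj ->] /=; rewrite ?Girr // addn0.
under eq_bigr do rewrite degE.
under eq_bigr do under eq_bigr do rewrite adjE.
under eq_bigr do rewrite big_split /=.
rewrite big_split /= nedgesE mul2n -addnn; congr (_ + _)%N.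
rewrite exchange_big; apply: eq_bigr => i _; apply: eq_bigr => j _.
by rewrite Gsym.
Qed.

Lemma lap_spectrumP : is_lap_spectrum R G (lap_spectrum R G).
Proof.
apply: epsilon_spec.
have [r cpL] : exists r : 'I_n -> R,
    char_poly (laplacian R G) = \prod_(i < n) ('X - (r i)%:P).
  apply: char_poly_sym_split; apply/matrixP => i j.
  by rewrite !mxE (proj1 simpleG) eq_sym; case: eqP => // ->.
exists (sort (fun x y : R => y <= x) [seq r i | i <- enum 'I_n]); split.
- by rewrite size_sort size_map size_enum_ord.
- by apply: sort_sorted => x y; exact: le_total.
- by rewrite cpL (perm_big _ (permEl (perm_sort _ _))) big_map big_enum.
Qed.

Lemma lap_eig_nonincreasing (i j : nat) : (i <= j < n)%N ->
  lap_eig R G j <= lap_eig R G i.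
Proof.
case/andP=> ij jn; have [sz srt _] := lap_spectrumP.
have tr : transitive (fun x y : R => y <= x).
  by move=> x y z yx zy; exact: le_trans zy yx.
apply: (sorted_leq_nth tr (@le_refl _ _) 0 srt) => //; rewrite inE sz //.
exact: leq_ltn_trans jn.
Qed.

Lemma sum_lap_eig : \sum_(i < n) lap_eig R G i = (2 * nedges G)%:R.
Proof.
have [sz _ cpL] := lap_spectrumP.
have := sum_roots_char_poly cpL; rewrite (big_nth 0) big_mkord sz => ->.
rewrite -sum_deg natr_sum /mxtrace.
by apply: eq_bigr => i _; rewrite !mxE eqxx (proj2 simpleG) subr0.
Qed.

Lemma sum_lap_eig_centered : (0 < n)%N ->
  \sum_(i < n) (lap_eig R G i - (2 * nedges G)%:R / n%:R) = 0.
Proof.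
move=> n_gt0; rewrite sumrB sum_lap_eig sumr_const card_ord -[X in _ - X]mulr_natr.
by rewrite divfK ?subrr // pnatr_eq0 -lt0n.
Qed.

End Laplacian.

Section ZeroSum.
Variables (R : realDomainType) (f : nat -> R) (n : nat).
Hypothesis f_sum0 : \sum_(i < n) f i = 0.

Let split_sum (g : nat -> R) k : (k <= n)%N ->
  \sum_(i < n) g i = \sum_(i < k) g i + \sum_(k <= i < n) g i.
Proof. by move=> kn; rewrite -!(big_mkord xpredT) (big_cat_nat (leq0n k) kn). Qed.

Lemma twice_prefix_le_sum_norm k : (k <= n)%N ->
  2 * \sum_(i < k) f i <= \sum_(i < n) `|f i|.
Proof.
move=> kn; move: f_sum0.
rewrite (split_sum f kn) (split_sum (fun i => `|f i|) kn) => sum0.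
have prefix_le : \sum_(i < k) f i <= \sum_(i < k) `|f i|.
  by apply: ler_sum => i _; exact: ler_norm.
have suffix_le : \sum_(k <= i < n) - f i <= \sum_(k <= i < n) `|f i|.
  by apply: ler_sum => i _; rewrite -normrN; exact: ler_norm.
rewrite sumrN in suffix_le; lra.
Qed.

Lemma nonincreasing_sign_split : (forall i j, (i <= j < n)%N -> f j <= f i) ->
  exists2 k, (k <= n)%N &
    (forall i, (i < k)%N -> 0 <= f i) /\ (forall i, (k <= i < n)%N -> f i <= 0).
Proof.
move=> f_noninc; pose k := find (fun i => f i < 0) (iota 0 n).
have kn : (k <= n)%N by rewrite -[X in (_ <= X)%N](size_iota 0) find_size.
exists k => //; split => i.
  move=> ik; have := before_find 0 ik; rewrite nth_iota ?(leq_trans ik) //.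
  by rewrite add0n => /negbT; rewrite -leNgt.
case/andP=> ki i_n; have kn' : (k < n)%N := leq_ltn_trans ki i_n.
have : f (nth 0 (iota 0 n) k) < 0.
  by apply: (nth_find 0 (a := fun i => f i < 0)); rewrite has_find size_iota.
rewrite nth_iota // add0n => /ltW; apply: le_trans; apply: f_noninc.
by rewrite ki.
Qed.

Lemma sum_norm_eq_twice_prefix : (forall i j, (i <= j < n)%N -> f j <= f i) ->
  (0 < n)%N ->
  exists2 k, (1 <= k <= n)%N & \sum_(i < n) `|f i| = 2 * \sum_(i < k) f i.
Proof.
move=> f_noninc n_gt0.
have [k kn [fk_ge0 fk_le0]] := nonincreasing_sign_split f_noninc.
have eq_k : \sum_(i < n) `|f i| = 2 * \sum_(i < k) f i.
  move: f_sum0.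
  rewrite (split_sum f kn) (split_sum (fun i => `|f i|) kn) => sum0.
  have -> : \sum_(i < k) `|f i| = \sum_(i < k) f i.
    by apply: eq_bigr => i _; rewrite ger0_norm ?fk_ge0.
  have -> : \sum_(k <= i < n) `|f i| = \sum_(k <= i < n) - f i.
    by rewrite !big_nat; apply: eq_bigr => i ki; rewrite ler0_norm ?fk_le0.
  rewrite sumrN; lra.
case: (posnP k) => [k0|k_gt0]; last by exists k; rewrite ?k_gt0.
by exists n; [rewrite n_gt0 leqnn | rewrite eq_k k0 big_ord0 f_sum0].
Qed.

End ZeroSum.

Theorem theorem1 (R : rcfType) (n : nat) (G : rel 'I_n) :
  simple_graph G ->
  spec_threshold_dominated R G ->
  exists T : rel 'I_n,
    [/\ threshold_graph T, nedges T = nedges G & lap_energy R T >= lap_energy R G].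
Proof.
move=> simpleG domG; case: (posnP n) => [n0|n_gt0].
  exists G; split => //; split => //.
  by exists 1%g, xpredT => i; have := ltn_ord i; rewrite {2}n0.
set d : R := (2 * nedges G)%:R / n%:R.
have [k k_range LE_G] := sum_norm_eq_twice_prefix
  (sum_lap_eig_centered R simpleG n_gt0)
  (fun i j ijn => lerB (lap_eig_nonincreasing R simpleG ijn) (lexx d)) n_gt0.
have [T [thT eT domT]] := domG k k_range.
exists T; split => //.
have LE_T : 2 * \sum_(i < k) (lap_eig R T i - d) <= lap_energy R T.
  have := sum_lap_eig_centered R (proj1 thT) n_gt0.
  rewrite /lap_energy eT -/d => sumT0.
  apply: (@twice_prefix_le_sum_norm _ (fun i => lap_eig R T i - d) _ sumT0).
  by case/andP: k_range.
apply: le_trans LE_T; rewrite /lap_energy -/d LE_G.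
by rewrite ler_pM2l // !sumrB lerB.
Qed.
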